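(* For any two distinct jobs $i,j$ and any time $t\ge 0$, we have $i\prec_{l(t)} j$ if and only if $\varphi_i(t)>\varphi_j(t)$.
   Context: Each job $j$ has processing time $p_j>0$ and weight $w_j>0$; jobs are processed on a single machine consecutively, job $j$ having completion time $C_j$, and the cost of a schedule is $\sum_j -w_j/C_j$ (to be minimized). For $t\ge0$, $\varphi_j(t)=\frac{w_j}{p_j(p_j+t)}$. Local dominance: $i\prec_{l(t)} j$ means that if job $j$ starts at time $t$ and is immediately followed by job $i$, then exchanging the positions of $i$ and $j$ (so that $i$ starts at $t$ and is immediately followed by $j$) strictly decreases the cost; since the completion times of all other jobs are unchanged, this means $\frac{w_i}{t+p_i}+\frac{w_j}{t+p_i+p_j}>\frac{w_j}{t+p_j}+\frac{w_i}{t+p_i+p_j}$. *)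

From mathcomp Require Import all_boot all_order all_algebra.
Set Implicit Arguments. Unset Strict Implicit. Unset Printing Implicit Defensive.
Import Order.TTheory GRing.Theory Num.Theory.
Local Open Scope ring_scope.

Definition phi (R : realFieldType) (J : Type) (p w : J -> R) (j : J) (t : R) : R :=
  w j / (p j * (p j + t)).

(* Local dominance i <_{l(t)} j: swapping (j at t, then i) into (i at t, then j)
   strictly decreases the cost sum -w/C, i.e. the cost contributions
   -(w_j/(t+p_j) + w_i/(t+p_j+p_i)) > -(w_i/(t+p_i) + w_j/(t+p_i+p_j)). *)
Definition local_dom (R : realFieldType) (J : Type) (p w : J -> R) (t : R) (i j : J) : Prop :=
  (- (w i / (t + p i)) - w j / (t + p i + p j))
    < (- (w j / (t + p j)) - w i / (t + p j + p i)).

(** Both the gain of the exchange and the gap [phi_i(t) - phi_j(t)] are the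
    same quantity [w_i p_j (p_j + t) - w_j p_i (p_i + t)] divided by a positive
    denominator, so they have the same sign. *)
From mathcomp Require Import all_boot all_order all_algebra.
From mathcomp Require Import ring lra.
Import Order.TTheory GRing.Theory Num.Theory.
Local Open Scope ring_scope.

Definition exchange_margin {R : realFieldType} (a b wi wj t : R) : R :=
  wi * b * (b + t) - wj * a * (a + t).

Lemma exchange_gainE {R : realFieldType} (a b wi wj t : R) :
    0 < a -> 0 < b -> 0 <= t ->
  (- (wj / (t + b)) - wi / (t + b + a)) - (- (wi / (t + a)) - wj / (t + a + b))
  = exchange_margin a b wi wj t / ((t + a) * (t + b) * (t + a + b)).
Proof.
move=> a_gt0 b_gt0 t_ge0; rewrite /exchange_margin; field.
by rewrite !lt0r_neq0 //; lra.
Qed.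

Lemma phi_gapE {R : realFieldType} (a b wi wj t : R) :
    0 < a -> 0 < b -> 0 <= t ->
  wi / (a * (a + t)) - wj / (b * (b + t))
  = exchange_margin a b wi wj t / (a * (a + t) * (b * (b + t))).
Proof.
move=> a_gt0 b_gt0 t_ge0; rewrite /exchange_margin; field.
by rewrite !lt0r_neq0 //; lra.
Qed.

Lemma exchange_gain_gt0 {R : realFieldType} (a b wi wj t : R) :
    0 < a -> 0 < b -> 0 <= t ->
  (0 < (- (wj / (t + b)) - wi / (t + b + a)) - (- (wi / (t + a)) - wj / (t + a + b)))
  = (0 < exchange_margin a b wi wj t).
Proof.
move=> a_gt0 b_gt0 t_ge0.
by rewrite exchange_gainE // pmulr_lgt0 // invr_gt0 !mulr_gt0 //; lra.
Qed.

Lemma phi_gap_gt0 {R : realFieldType} (a b wi wj t : R) :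
    0 < a -> 0 < b -> 0 <= t ->
  (0 < wi / (a * (a + t)) - wj / (b * (b + t))) = (0 < exchange_margin a b wi wj t).
Proof.
move=> a_gt0 b_gt0 t_ge0.
by rewrite phi_gapE // pmulr_lgt0 // invr_gt0 !mulr_gt0 //; lra.
Qed.

Theorem lemma1 (R : realFieldType) (J : Type) (p w : J -> R)
  (hp : forall k, 0 < p k) (hw : forall k, 0 < w k)
  (i j : J) (hij : i <> j) (t : R) (ht : 0 <= t) :
  local_dom p w t i j <-> phi p w j t < phi p w i t.
Proof.
rewrite /local_dom /phi -subr_gt0 -[_ < w i / _]subr_gt0.
by rewrite exchange_gain_gt0 ?phi_gap_gt0.
Qed.
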